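(* Let $f$ be a quadratic form in $s$ variables with integer coefficients, $b,a\in\mathbb{Z}$, and let $q_1,q_2,W_1,W_2$ be positive integers with $\gcd(q_1W_1,q_2W_2)=1$. Then $$S^\ast_{W_1W_2,b}(q_1q_2,a)=S^\ast_{W_1,b}(q_1,a\overline{q_2})\,S^\ast_{W_2,b}(q_2,a\overline{q_1}),$$ where $\overline{q_2}$ denotes an inverse of $q_2$ modulo $q_1$ and $\overline{q_1}$ an inverse of $q_1$ modulo $q_2$.
   Context: $e(z)=e^{2\pi iz}$. For positive integers $q,W$ and integers $a,b$, $$S^\ast_{W,b}(q,a)=\sum_{\substack{1\le c_1,\ldots,c_s\le qW\\ \gcd(c_j,q)=1,\ c_j\equiv b\ (\mathrm{mod}\ W)\ (1\le j\le s)}}e\Big(\frac{af(\mathbf{c})}{q}\Big).$$ *)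

From HB Require Import structures.
From mathcomp Require Import all_boot all_order all_algebra.
From mathcomp Require Import all_classical all_reals all_analysis.
From mathcomp Require Import complex.
Set Implicit Arguments. Unset Strict Implicit. Unset Printing Implicit Defensive.
Import Order.TTheory GRing.Theory Num.Theory.
Local Open Scope ring_scope.

Definition eC (R : realType) (x : R) : R[i] :=
  Complex (cos (2 * pi * x)) (sin (2 * pi * x)).

(* The integer quadratic form in s variables with coefficient matrix M:
   f(c) = sum_{i,j} M i j c_i c_j  (every integral quadratic form has this shape,
   e.g. with M upper triangular). *)
Definition qform (s : nat) (M : 'M[int]_s) (c : 'I_s -> int) : int :=
  \sum_(i < s) \sum_(j < s) M i j * c i * c j.

(* S^*_{W,b}(q,a): the sum over c in [1, qW]^s, represented as c j = (k j).+1
   with k : {ffun 'I_s -> 'I_(q*W)}, subject to gcd(c_j,q)=1 and c_j = b mod W. *)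
Definition Sstar (R : realType) (s : nat) (M : 'M[int]_s)
    (W : nat) (b : int) (q : nat) (a : int) : R[i] :=
  \sum_(k : {ffun 'I_s -> 'I_(q * W)} |
          [forall j, coprime (k j).+1 q && ((Posz (k j).+1 == b %[mod Posz W])%Z)])
     eC ((a * qform M (fun j => Posz (k j).+1))%:~R / q%:R).

From HB Require Import structures.
From mathcomp Require Import all_boot all_order all_algebra.
From mathcomp Require Import all_classical all_reals all_analysis.
From mathcomp Require Import complex.
From mathcomp Require Import ring.
Set Implicit Arguments.
Unset Strict Implicit.
Unset Printing Implicit Defensive.

Import Order.TTheory GRing.Theory Num.Theory.
Local Open Scope ring_scope.

(* By the Chinese remainder theorem, reducing each c_j modulo q1 W1 and modulo
   q2 W2 is a bijection from [1, q1 q2 W1 W2]^s onto [1, q1 W1]^s x [1, q2 W2]^s,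
   and both the coprimality and the congruence conditions split along it.
   Since f(c) = f(c1) mod q1 and f(c) = f(c2) mod q2, the integer
   a f(c) - q2 (a q2bar f(c1)) - q1 (a q1bar f(c2)) is divisible by q1 q2, so
   e(a f(c) / q1 q2) = e(a q2bar f(c1) / q1) e(a q1bar f(c2) / q2). *)

Section ExponentialPhase.
Variable R : realType.
Implicit Types x y : R.

Lemma eCD x y : eC (x + y) = eC x * eC y.
Proof. by rewrite /eC mulrDr cosD sinD; congr Complex; ring. Qed.

Lemma eC_periodic : periodic (@eC R) 1.
Proof.
by move=> x; rewrite /eC mulrDr mulr1 mulr_natl cosD2pi sinD2pi.
Qed.

Lemma eCDz x (n : int) : eC (x + n%:~R) = eC x.
Proof.
case: n => n; first exact: periodicn eC_periodic n x.
rewrite NegzE intrN -[in RHS](subrK n.+1%:R x).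
by rewrite -[n.+1%:R]/(1 *+ n.+1) (periodicn eC_periodic).
Qed.

Lemma eC_frac_mod (m : nat) (x y : int) : (0 < m)%N ->
  (x = y %[mod m])%Z -> eC (x%:~R / m%:R : R) = eC (y%:~R / m%:R).
Proof.
move=> m_gt0 /eqP; rewrite eqz_mod_dvd => /divzK xy.
have -> : x = y + ((x - y) %/ m)%Z * m by rewrite xy addrC subrK.
rewrite intrD intrM mulrDl mulfK ?pnatr_eq0 -?lt0n //.
exact: eCDz.
Qed.

Lemma eC_fracD (m n : nat) (u v : int) : (0 < m)%N -> (0 < n)%N ->
  eC ((u * n + v * m)%:~R / (m * n)%:R : R) = eC (u%:~R / m%:R) * eC (v%:~R / n%:R).
Proof.
move=> m_gt0 n_gt0; rewrite -eCD; congr eC.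
have m0 : (m%:R : R) != 0 by rewrite pnatr_eq0 -lt0n.
have n0 : (n%:R : R) != 0 by rewrite pnatr_eq0 -lt0n.
by rewrite intrD !intrM natrM !pmulrn; field; rewrite m0 n0.
Qed.

End ExponentialPhase.

Lemma qform_mod s (M : 'M[int]_s) (m : int) (c c' : 'I_s -> int) :
  (forall j, (c j = c' j %[mod m])%Z) -> (qform M c = qform M c' %[mod m])%Z.
Proof.
move=> cc'.
have modD x y u v : (x = y %[mod m])%Z -> (u = v %[mod m])%Z ->
    (x + u = y + v %[mod m])%Z.
  by move=> xy uv; rewrite -modzDm xy uv modzDm.
have modM x y u v : (x = y %[mod m])%Z -> (u = v %[mod m])%Z ->
    (x * u = y * v %[mod m])%Z.
  by move=> xy uv; rewrite -modzMm xy uv modzMm.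
apply: (big_ind2 _ _ modD) => // i _.
apply: (big_ind2 _ _ modD) => // j _.
by apply: (modM) => //; apply: (modM).
Qed.

Lemma crt_modz (m n : nat) (mbar nbar x y z : int) : coprime m n ->
  (nbar * n == 1 %[mod m])%Z -> (mbar * m == 1 %[mod n])%Z ->
  (x = y %[mod m])%Z -> (x = z %[mod n])%Z ->
  (x = y * nbar * n + z * mbar * m %[mod (m * n)%N])%Z.
Proof.
rewrite ![(_ * _ == 1 %[mod _])%Z]eq_sym !eqz_mod_dvd.
move=> mn_coprime nbarP mbarP /eqP + /eqP; rewrite !eqz_mod_dvd => xy xz.
apply/eqP; rewrite eqz_mod_dvd PoszM Gauss_dvdz //; apply/andP; split.
- have -> : x - (y * nbar * n + z * mbar * m) =
      (x - y) + y * (1 - nbar * n) - (z * mbar) * m by ring.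
  exact: rpredB (rpredD xy (dvdz_mull _ nbarP)) (dvdz_mull _ (dvdzz _)).
- have -> : x - (y * nbar * n + z * mbar * m) =
      (x - z) + z * (1 - mbar * m) - (y * nbar) * n by ring.
  exact: rpredB (rpredD xz (dvdz_mull _ mbarP)) (dvdz_mull _ (dvdzz _)).
Qed.

Lemma eC_qform_crt (R : realType) s (M : 'M[int]_s) (a : int) (q1 q2 : nat)
    (q2bar q1bar : int) (c c1 c2 : 'I_s -> int) :
  (0 < q1)%N -> (0 < q2)%N -> coprime q1 q2 ->
  (q2bar * q2 == 1 %[mod q1])%Z -> (q1bar * q1 == 1 %[mod q2])%Z ->
  (forall j, (c j = c1 j %[mod q1])%Z) -> (forall j, (c j = c2 j %[mod q2])%Z) ->
  eC ((a * qform M c)%:~R / (q1 * q2)%:R : R) =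
  eC ((a * q2bar * qform M c1)%:~R / q1%:R) *
  eC ((a * q1bar * qform M c2)%:~R / q2%:R).
Proof.
move=> q1_gt0 q2_gt0 q12_coprime q2barP q1barP cc1 cc2.
rewrite -eC_fracD //; apply: eC_frac_mod; first by rewrite muln_gt0 q1_gt0.
have -> : a * q2bar * qform M c1 * q2 + a * q1bar * qform M c2 * q1 =
    a * qform M c1 * q2bar * q2 + a * qform M c2 * q1bar * q1 by ring.
apply: crt_modz => //.
- by rewrite -modzMmr (qform_mod M cc1) modzMmr.
- by rewrite -modzMmr (qform_mod M cc2) modzMmr.
Qed.

Definition ord_mod (m N : nat) (m_gt0 : (0 < m)%N) (k : 'I_N) : 'I_m :=
  Ordinal (ltn_pmod k m_gt0).

Lemma ord_modS (m N d : nat) (m_gt0 : (0 < m)%N) (k : 'I_N) : (d %| m)%N ->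
  ((ord_mod m_gt0 k).+1 = k.+1 %[mod d])%N.
Proof.
by move=> dm; rewrite -[_.+1]addn1 -[k.+1]addn1 -modnDml (modn_dvdm _ dm) modnDml.
Qed.

Section CRTFfun.
Variables (s m n N : nat) (m_gt0 : (0 < m)%N) (n_gt0 : (0 < n)%N).

Definition crt_ffun (k : {ffun 'I_s -> 'I_N}) :
    {ffun 'I_s -> 'I_m} * {ffun 'I_s -> 'I_n} :=
  ([ffun j => ord_mod m_gt0 (k j)], [ffun j => ord_mod n_gt0 (k j)]).

Lemma crt_ffun_bij : coprime m n -> (m * n = N)%N -> bijective crt_ffun.
Proof.
move=> mn_coprime mnN; apply: inj_card_bij; last first.
  by rewrite card_prod !card_ffun !card_ord -expnMn mnN.
move=> k k' [/ffunP km /ffunP kn]; apply/ffunP => j; apply: val_inj => /=.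
have := chinese_remainder mn_coprime (k j) (k' j).
rewrite mnN !(modn_small (ltn_ord _)).
have /(congr1 val) := km j; have /(congr1 val) := kn j; rewrite !ffunE /= => -> ->.
by rewrite !eqxx => /eqP.
Qed.

End CRTFfun.

Lemma forall_andb (T : finType) (P Q : pred T) :
  [forall x, P x && Q x] = [forall x, P x] && [forall x, Q x].
Proof.
apply/forallP/andP => [PQ | [/forallP P_ /forallP Q_] x]; last by rewrite P_ Q_.
by split; apply/forallP => x; have /andP[] := PQ x.
Qed.

Definition admissible (q W : nat) (b : int) (x : nat) : bool :=
  coprime x q && (Posz x == b %[mod W])%Z.

Lemma admissible_mod (q W : nat) (b : int) (x y : nat) :
  (x = y %[mod q * W])%N -> admissible q W b x = admissible q W b y.
Proof.
move=> xy; have xy_q : (x = y %[mod q])%N.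
  by rewrite -(modn_dvdm x (dvdn_mulr W (dvdnn q))) xy modn_dvdm // dvdn_mulr.
have xy_W : (x = y %[mod W])%N.
  by rewrite -(modn_dvdm x (dvdn_mull q (dvdnn W))) xy modn_dvdm // dvdn_mull.
by rewrite /admissible -coprime_modl xy_q coprime_modl !modz_nat xy_W.
Qed.

Lemma admissibleM (q1 q2 W1 W2 : nat) (b : int) (x : nat) : coprime W1 W2 ->
  admissible (q1 * q2) (W1 * W2) b x = admissible q1 W1 b x && admissible q2 W2 b x.
Proof.
move=> W12_coprime.
by rewrite /admissible coprimeMr !eqz_mod_dvd PoszM Gauss_dvdz // andbACA.
Qed.

Lemma admissible_crt_ffun (s q1 q2 W1 W2 N : nat) (b : int)
    (m1_gt0 : (0 < q1 * W1)%N) (m2_gt0 : (0 < q2 * W2)%N)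
    (k : {ffun 'I_s -> 'I_N}) : coprime W1 W2 ->
  [forall j, admissible (q1 * q2) (W1 * W2) b (k j).+1] =
  [forall j, admissible q1 W1 b ((crt_ffun m1_gt0 m2_gt0 k).1 j).+1] &&
  [forall j, admissible q2 W2 b ((crt_ffun m1_gt0 m2_gt0 k).2 j).+1].
Proof.
move=> W12_coprime; rewrite -forall_andb; apply: eq_forallb => j.
by rewrite !ffunE admissibleM // !(admissible_mod _ (ord_modS _ _ (dvdnn _))).
Qed.

Theorem lemma2p1 (R : realType) (s : nat) (M : 'M[int]_s) (b a : int)
    (q1 q2 W1 W2 : nat) :
  (0 < q1)%N -> (0 < q2)%N -> (0 < W1)%N -> (0 < W2)%N ->
  coprime (q1 * W1) (q2 * W2) ->
  forall q2bar q1bar : int,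
  (q2bar * Posz q2 == 1 %[mod Posz q1])%Z ->
  (q1bar * Posz q1 == 1 %[mod Posz q2])%Z ->
  Sstar R M (W1 * W2) b (q1 * q2) a =
  Sstar R M W1 b q1 (a * q2bar) * Sstar R M W2 b q2 (a * q1bar).
Proof.
move=> q1_gt0 q2_gt0 W1_gt0 W2_gt0 qW_coprime q2bar q1bar q2barP q1barP.
have q12_coprime : coprime q1 q2.
  apply: coprime_dvdl (dvdn_mulr _ (dvdnn _)) _.
  exact: coprime_dvdr (dvdn_mulr _ (dvdnn _)) qW_coprime.
have W12_coprime : coprime W1 W2.
  apply: coprime_dvdl (dvdn_mull _ (dvdnn _)) _.
  exact: coprime_dvdr (dvdn_mull _ (dvdnn _)) qW_coprime.
have m1_gt0 : (0 < q1 * W1)%N by rewrite muln_gt0 q1_gt0.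
have m2_gt0 : (0 < q2 * W2)%N by rewrite muln_gt0 q2_gt0.
rewrite /Sstar big_distrlr pair_big_dep /=.
pose h := @crt_ffun s _ _ (q1 * q2 * (W1 * W2)) m1_gt0 m2_gt0.
rewrite [RHS](reindex h) /=; last first.
  by apply/onW_bij/crt_ffun_bij; rewrite // mulnACA.
apply: eq_big => k.
-
  exact: admissible_crt_ffun.
- move=> _; apply: eC_qform_crt => // j; rewrite ffunE !modz_nat ord_modS //.
  all: exact: dvdn_mulr.
Qed.
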